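(* Let $X$ be a separated metric compact Hausdorff space with metric $d$ and let $A\subseteq X$ be a closed subset, with the induced topology and metric, so that the inclusion $A\hookrightarrow X$ is an embedding. Let $q_0,q_1\colon X\to P$ be the pushout in $\mathbf{MetCH_{sep}}$ of $A\hookrightarrow X$ along itself. Then the kernel metric of $\binom{q_0}{q_1}\colon X+X\to P$, i.e. $((x,i),(y,j))\mapsto d_P(q_i(x),q_j(y))$, equals $\gamma^A$.
   Context: A metric on a set $X$ is a map $d\colon X\times X\to[0,\infty]$ with $d(x,x)=0$ and $d(x,z)\le d(x,y)+d(y,z)$ (not necessarily symmetric, $\infty$ allowed); separated means $d(x,y)=0=d(y,x)$ implies $x=y$. A separated metric compact Hausdorff space is a compact Hausdorff space with a separated metric continuous $X\times X\to[0,\infty]$ for the upper topology on $[0,\infty]$ (open sets $]u,\infty]$); $\mathbf{MetCH_{sep}}$ is the category of these with continuous non-expansive maps; an embedding is an injective morphism preserving distances. $X+X$ is the coproduct with elements $(x,i)$, $i\in\{0,1\}$. $\gamma^A\colon(X+X)\times(X+X)\to[0,\infty]$ is defined by $\gamma^A((x,i),(y,i))=d(x,y)$ and $\gamma^A((x,i),(y,1-i))=\inf_{a\in A}(d(x,a)+d(a,y))$ for $x,y\in X$, $i\in\{0,1\}$. *)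

From HB Require Import structures.
From mathcomp Require Import all_boot all_order all_algebra.
From mathcomp Require Import all_classical all_reals all_analysis.
Set Implicit Arguments. Unset Strict Implicit. Unset Printing Implicit Defensive.
Import Order.TTheory GRing.Theory Num.Theory.
Local Open Scope classical_set_scope.
Local Open Scope ring_scope.
Local Open Scope ereal_scope.

(* A "metric" in the sense of the paper: d : X x X -> [0, +oo], d x x = 0,
   triangle inequality; not necessarily symmetric, +oo allowed.
   [0, +oo] is rendered as the nonnegative part of \bar R. *)
Definition is_metric (R : realType) (T : Type) (d : T -> T -> \bar R) : Prop :=
  [/\ (forall x y, 0 <= d x y),
      (forall x, d x x = 0) &
      (forall x y z, d x z <= d x y + d y z)].

Definition separated_metric (R : realType) (T : Type) (d : T -> T -> \bar R) : Prop :=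
  forall x y, d x y = 0 -> d y x = 0 -> x = y.

(* continuity of d : T x T -> [0,+oo] for the upper topology on [0,+oo],
   whose (sub)basic opens are ]u, +oo]: preimages of ]u,+oo] are open. *)
Definition upper_continuous (R : realType) (T : topologicalType)
  (d : T -> T -> \bar R) : Prop :=
  forall u : \bar R, open [set p : T * T | u < d p.1 p.2].

Definition MetCH_sep_obj (R : realType) (T : topologicalType)
  (d : T -> T -> \bar R) : Prop :=
  [/\ compact [set: T], hausdorff_space T, is_metric d,
      separated_metric d & upper_continuous d].

Definition MetCH_mor (R : realType) (T U : topologicalType)
  (dT : T -> T -> \bar R) (dU : U -> U -> \bar R) (f : T -> U) : Prop :=
  continuous f /\ (forall x y, dU (f x) (f y) <= dT x y).

(* A cocone
   over the span X <- A -> X is a pair f0, f1 with f0 \o incl = f1 \o incl,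
   i.e. f0 and f1 agree on A. *)
Definition is_pushout_along_self (R : realType) (X : topologicalType)
  (d : X -> X -> \bar R) (A : set X)
  (P : topologicalType) (dP : P -> P -> \bar R) (q0 q1 : X -> P) : Prop :=
  [/\ MetCH_sep_obj dP, MetCH_mor d dP q0, MetCH_mor d dP q1,
      (forall a, A a -> q0 a = q1 a) &
      (forall (Q : topologicalType) (dQ : Q -> Q -> \bar R),
         MetCH_sep_obj dQ ->
         forall f0 f1 : X -> Q, MetCH_mor d dQ f0 -> MetCH_mor d dQ f1 ->
         (forall a, A a -> f0 a = f1 a) ->
         exists! h : P -> Q,
           [/\ MetCH_mor dP dQ h, h \o q0 = f0 & h \o q1 = f1])].

(* The metric gamma^A on X + X; points are pairs (x, i), i : bool
   (false = 0, true = 1). *)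
Definition gammaA (R : realType) (X : Type) (d : X -> X -> \bar R) (A : set X)
  (p q : X * bool) : \bar R :=
  if p.2 == q.2 then d p.1 q.1
  else ereal_inf [set d p.1 a + d a q.1 | a in A].

Definition kernel_metric (R : realType) (X P : Type) (dP : P -> P -> \bar R)
  (q0 q1 : X -> P) (p q : X * bool) : \bar R :=
  let q_ i := if i then q1 else q0 in
  dP (q_ p.2 p.1) (q_ q.2 q.1).

From HB Require Import structures.
From mathcomp Require Import all_boot all_order all_algebra.
From mathcomp Require Import all_classical all_reals all_analysis.
From mathcomp Require Import lra.
Set Implicit Arguments. Unset Strict Implicit. Unset Printing Implicit Defensive.
Import Order.TTheory GRing.Theory Num.Theory.
Local Open Scope classical_set_scope.
Local Open Scope ring_scope.
Local Open Scope ereal_scope.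
Local Open Scope quotient_scope.

(* If q0 and q1 are non-expansive and agree on A, the triangle inequality
   through q_i a = q_j a gives d_P(q_i x, q_j y) <= gammaA.  For the converse,
   glue two copies of X along A: the quotient of X + X by (a, 0) ~ (a, 1),
   a in A, with the metric induced by gammaA, is again an object of MetCH_sep.
   Compactness of A makes the detour inf_(a in A) d(x, a) + d(a, y) lower
   semicontinuous in (x, y) and attained when it vanishes; this gives upper
   continuity and separation, and Hausdorffness follows from those two.  The
   universal property of P then provides a non-expansive h from P to this space
   with h \o q_i = (x |-> [x, i]), whence gammaA <= d_P(q_i _, q_j _). *)

Section lower_semicontinuity.
Context {R : realType}.

Lemma EFin_lt_dense (a : R) (x : \bar R) :
  a%:E < x -> exists2 c : R, (a < c)%R & c%:E < x.
Proof.
case: x => [r||] //= => [|_].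
  by rewrite lte_fin => ar; exists ((a + r) / 2)%R; rewrite ?lte_fin; lra.
by exists (a + 1)%R; rewrite ?ltry //; lra.
Qed.

Lemma lteD_split (x y : \bar R) (m : R) : 0 <= x -> 0 <= y ->
  m%:E < x + y -> exists s t : R, [/\ s%:E < x, t%:E < y & (m < s + t)%R].
Proof.
case: x => [r||] //; case: y => [r'||] // _ _.
- rewrite -EFinD lte_fin => h.
  exists (r - (r + r' - m) / 3)%R, (r' - (r + r' - m) / 3)%R.
  by rewrite !lte_fin; split; lra.
- move=> _; exists (r - 1)%R, (m - r + 2)%R.
  by rewrite lte_fin ltry; split => //; lra.
- move=> _; exists (m - r' + 2)%R, (r' - 1)%R.
  by rewrite lte_fin ltry; split => //; lra.
- by move=> _; exists m, 1%R; rewrite !ltry; split => //; lra.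
Qed.

Lemma ereal_inf_leDl (T : Type) (A : set T) (f g : T -> \bar R) (c : \bar R) :
  0 <= c -> (forall a, A a -> 0 <= g a) -> (forall a, A a -> f a <= c + g a) ->
  ereal_inf (f @` A) <= c + ereal_inf (g @` A).
Proof.
case: c => [r||] // _ g0 fg.
  rewrite addeC -leeBlDr //; apply/ereal_infP => _ [a Aa <-].
  rewrite leeBlDr // addeC; apply: le_trans (fg a Aa).
  by apply: ereal_inf_lbound; exists a.
have : 0 <= ereal_inf (g @` A) by apply/ereal_infP => _ [a Aa <-]; exact: g0.
by case: (ereal_inf _) => // *; rewrite ?addye ?leey.
Qed.

Lemma lower_semicontinuous_comp (T U : topologicalType) (f : U -> \bar R) (g : T -> U) :
  continuous g -> lower_semicontinuous f -> lower_semicontinuous (f \o g).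
Proof.
move=> cg /lower_semicontinuousP lf; apply/lower_semicontinuousP => a.
exact: (continuousP _).1 cg _ (lf a).
Qed.

Lemma lower_semicontinuousD (T : topologicalType) (f g : T -> \bar R) :
  (forall x, 0 <= f x) -> (forall x, 0 <= g x) ->
  lower_semicontinuous f -> lower_semicontinuous g -> lower_semicontinuous (f \+ g).
Proof.
move=> f0 g0 lf lg x a /(lteD_split (f0 x) (g0 x)) [s [t [sf tg ast]]].
have [V Vx Vf] := lf x s sf; have [W Wx Wg] := lg x t tg.
exists (V `&` W); first exact: filterI.
move=> y [/Vf sfy /Wg tgy]; apply: lt_trans (lteD sfy tgy).
by rewrite -EFinD lte_fin.
Qed.

Lemma compact_lsc_near_lbound (Y T : topologicalType) (F : Y -> T -> \bar R)
    (A : set T) (y : Y) (a : R) :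
  compact A -> lower_semicontinuous (fun p : Y * T => F p.1 p.2) ->
  (forall x, A x -> a%:E < F y x) ->
  exists2 b : R, (a < b)%R & \forall y' \near y, forall x, A x -> b%:E <= F y' x.
Proof.
move=> cA lF aF.
(* Thresholds come from at_right a, so finitely many local bounds combine. *)
have := (compact_near_coveringP A).1 cA (R * Y)%type
  (filter_prod (at_right a) (nbhs y)) (fun i x => i.1%:E <= F i.2 x) _.
case.
- move=> x Ax; have [c ac cF] := EFin_lt_dense (aF x Ax).
  have [V [[Vy Vx] /= [Vy0 Vx0] VF] cV] := lF (y, x) c cF.
  exists (Vx, [set i : R * Y | (i.1 < c)%R /\ Vy i.2]) => /=.
    split => //; exists ([set b | (b < c)%R], Vy) => //; split => //.
    exact: nbhs_right_lt.
  move=> [x' [b y']] /= [Vxx' [bc Vyy']].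
  apply: le_trans (ltW (cV (y', x') (VF (y', x') (conj Vyy' Vxx')))).
  by rewrite lee_fin ltW.
- move=> [B W] /= [B0 W0] BW.
  have [b [Bb ab]] := filter_ex (filterI B0 (nbhs_right_gt a)).
  exists b => //; apply: filterS W0 => y' Wy' x Ax.
  exact: (BW (b, y')).
Qed.

Lemma lower_semicontinuous_ereal_inf (Y T : topologicalType) (F : Y -> T -> \bar R)
    (A : set T) :
  compact A -> lower_semicontinuous (fun p : Y * T => F p.1 p.2) ->
  lower_semicontinuous (fun y => ereal_inf (F y @` A)).
Proof.
move=> cA lF y a aF.
have aFy x : A x -> a%:E < F y x.
  by move=> Ax; apply: lt_le_trans aF _; apply: ereal_inf_lbound; exists x.
have [b ab Fb] := compact_lsc_near_lbound cA lF aFy.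
exists [set y' | forall x, A x -> b%:E <= F y' x] => // y' by'.
apply: (@lt_le_trans _ _ b%:E); first by rewrite lte_fin.
by apply/ereal_infP => _ [x Ax <-]; exact: by'.
Qed.

Lemma ereal_inf_eq0_attained (Y T : topologicalType) (F : Y -> T -> \bar R)
    (A : set T) (y : Y) :
  compact A -> lower_semicontinuous (fun p : Y * T => F p.1 p.2) ->
  (forall x, 0 <= F y x) -> ereal_inf (F y @` A) = 0 ->
  exists2 x, A x & F y x = 0.
Proof.
move=> cA lF F0 inf0; apply: contrapT => nF0.
have pos x : A x -> (0%R)%:E < F y x.
  by move=> Ax; rewrite lt_def F0 andbT; apply/eqP => Fx0; apply: nF0; exists x.
have [b b0 Fb] := compact_lsc_near_lbound cA lF pos.
have : b%:E <= ereal_inf (F y @` A).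
  by apply/ereal_infP => _ [x Ax <-]; exact: (nbhs_singleton Fb).
by rewrite inf0 lee_fin leNgt b0.
Qed.

End lower_semicontinuity.

Definition glued (X : Type) (A : set X) (p q : X * bool) : Prop :=
  p = q \/ p.1 = q.1 /\ A p.1.

Definition detour (R : realType) (X : Type) (d : X -> X -> \bar R) (A : set X)
  (x y : X) : \bar R := ereal_inf [set d x a + d a y | a in A].

Section detour.
Variables (R : realType) (X : Type) (d : X -> X -> \bar R) (A : set X).
Hypothesis d_metric : is_metric d.

Let d_ge0 x y : 0 <= d x y. Proof. by case: d_metric. Qed.
Let dxx x : d x x = 0. Proof. by case: d_metric. Qed.
Let d_triangle x y z : d x z <= d x y + d y z. Proof. by case: d_metric. Qed.

Lemma detour_ge0 x y : 0 <= detour d A x y.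
Proof. by apply/ereal_infP => _ [a _ <-]; exact: adde_ge0. Qed.

Lemma le_detour x y : d x y <= detour d A x y.
Proof. by apply/ereal_infP => _ [a _ <-]. Qed.

Lemma detour_meml x y : A x -> detour d A x y = d x y.
Proof.
move=> Ax; apply/le_anti; rewrite le_detour andbT.
by apply: ereal_inf_lbound; exists x => //; rewrite dxx add0e.
Qed.

Lemma detour_memr x y : A y -> detour d A x y = d x y.
Proof.
move=> Ay; apply/le_anti; rewrite le_detour andbT.
by apply: ereal_inf_lbound; exists y => //; rewrite dxx adde0.
Qed.

Lemma detour_trianglel x y z : detour d A x z <= d x y + detour d A y z.
Proof.
apply: ereal_inf_leDl => // [a _|a _]; first exact: adde_ge0.
by rewrite addeA; apply: leeD.
Qed.

Lemma detour_triangler x y z : detour d A x z <= detour d A x y + d y z.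
Proof.
rewrite addeC; apply: ereal_inf_leDl => // [a _|a _]; first exact: adde_ge0.
by rewrite addeCA; apply: leeD => //; rewrite addeC.
Qed.

Lemma gammaAE p q :
  gammaA d A p q = if p.2 == q.2 then d p.1 q.1 else detour d A p.1 q.1.
Proof. by []. Qed.

Lemma le_gammaA p q : d p.1 q.1 <= gammaA d A p q.
Proof. by rewrite gammaAE; case: ifP => // _; exact: le_detour. Qed.

Lemma gammaA_meml p q : A p.1 -> gammaA d A p q = d p.1 q.1.
Proof. by move=> Ap; rewrite gammaAE; case: ifP => // _; exact: detour_meml. Qed.

Lemma gammaA_memr p q : A q.1 -> gammaA d A p q = d p.1 q.1.
Proof. by move=> Aq; rewrite gammaAE; case: ifP => // _; exact: detour_memr. Qed.

Lemma gammaA_glued p p' q q' :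
  glued A p p' -> glued A q q' -> gammaA d A p q = gammaA d A p' q'.
Proof.
move=> [<-|[pp' Ap]] [<-|[qq' Aq]] //.
- by rewrite !gammaA_memr // -qq'.
- by rewrite !gammaA_meml // -pp'.
- by rewrite !gammaA_meml -?pp' // pp' qq'.
Qed.

Lemma gammaA_metric : is_metric (gammaA d A).
Proof.
split=> [p q|p|[x i] [y j] [z k]]; rewrite ?gammaAE ?eqxx //.
  by case: ifP => _; [exact: d_ge0 | exact: detour_ge0].
case: i; case: j; case: k => /=; first [exact: d_triangle | exact: detour_trianglel
  | exact: detour_triangler
  | exact: le_trans (d_triangle x y z) (leeD (le_detour x y) (le_detour y z))].
Qed.

End detour.

Section upper_continuity.
Variables (R : realType) (T : topologicalType) (d : T -> T -> \bar R).

Lemma upper_continuous_lscP : (forall x y, 0 <= d x y) ->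
  upper_continuous d <-> lower_semicontinuous (fun p : T * T => d p.1 p.2).
Proof.
move=> d0; rewrite lower_semicontinuousP; split => [dup a|dlsc]; first exact: dup.
case=> [a||]; first exact: dlsc.
  rewrite (_ : [set p | +oo < _] = set0); first exact: open0.
  by apply/seteqP; split => p //=; rewrite ltNge leey.
rewrite (_ : [set p | -oo < _] = setT); first exact: openT.
by apply/seteqP; split => // p _ /=; exact: lt_le_trans ltNy0 (d0 _ _).
Qed.

Lemma metric_upper_continuous_hausdorff : is_metric d -> separated_metric d ->
  upper_continuous d -> hausdorff_space T.
Proof.
move=> [d0 dxx _] dsep /(upper_continuous_lscP d0) dlsc.
(* A common point c of neighbourhoods of p and q would satisfy 0 < d c c. *)
have meets_dist0 p q : nbhs p `#` nbhs q -> d p q = 0.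
  move=> pq; apply/le_anti; rewrite d0 andbT leNgt; apply/negP => dpq.
  have [V [[Vp Vq] /= [Vp0 Vq0] VV] dV] := dlsc (p, q) 0%R dpq.
  have [c [Vpc Vqc]] := pq _ _ Vp0 Vq0.
  by have := dV (c, c) (VV (c, c) (conj Vpc Vqc)); rewrite /= dxx ltxx.
move=> p q pq; apply: dsep; apply: meets_dist0 => // B C Bq Cp.
by rewrite setIC; exact: pq.
Qed.

Lemma detour_term_lsc : is_metric d -> upper_continuous d ->
  lower_semicontinuous (fun p : T * T * T => d p.1.1 p.2 + d p.2 p.1.2).
Proof.
move=> [d0 _ _] /(upper_continuous_lscP d0) dlsc.
apply: lower_semicontinuousD => [p|p||]; try exact: d0.
  apply: (lower_semicontinuous_comp (g := fun p : T * T * T => (p.1.1, p.2))) dlsc.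
  move=> p; apply: cvg_pair => /=; last exact: cvg_snd.
  exact: cvg_comp cvg_fst cvg_fst.
apply: (lower_semicontinuous_comp (g := fun p : T * T * T => (p.2, p.1.2))) dlsc.
move=> p; apply: cvg_pair => /=; first exact: cvg_snd.
exact: cvg_comp cvg_fst cvg_snd.
Qed.

Lemma detour_lsc (A : set T) : is_metric d -> upper_continuous d -> compact A ->
  lower_semicontinuous (fun p : T * T => detour d A p.1 p.2).
Proof.
move=> dm dup cA.
exact: (lower_semicontinuous_ereal_inf (F := fun p a => d p.1 a + d a p.2) cA
  (detour_term_lsc dm dup)).
Qed.

Lemma detour_eq0 (A : set T) x y : is_metric d -> upper_continuous d -> compact A ->
  detour d A x y = 0 -> exists2 a, A a & d x a = 0 /\ d a y = 0.
Proof.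
move=> dm dup cA dxy0; have [d0 _ _] := dm.
have [|a Aa] := ereal_inf_eq0_attained (F := fun p a => d p.1 a + d a p.2) (y := (x, y))
  cA (detour_term_lsc dm dup) _ dxy0.
  by move=> a; exact: adde_ge0.
by move/eqP; rewrite padde_eq0 // => /andP[/eqP xa /eqP ay]; exists a.
Qed.

End upper_continuity.

Lemma open_setX (U V : topologicalType) (S : set U) (T : set V) :
  open S -> open T -> open (S `*` T).
Proof.
move=> oS oT; rewrite openE => -[x y] [Sx Ty]; exists (S, T) => //=.
by split; apply: open_nbhs_nbhs.
Qed.

Lemma nbhs_pair_open (T U : topologicalType) (x : T) (y : U) (S : set (T * U)) :
  nbhs (x, y) S -> exists Ox Oy, [/\ open_nbhs x Ox, open_nbhs y Oy & Ox `*` Oy `<=` S].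
Proof.
move=> [[Bx By] /= [Bx0 By0] BS]; move: Bx0 By0.
rewrite !nbhsE => -[Ox xOx OxB] [Oy yOy OyB].
by exists Ox, Oy; split => // -[u v] [/OxB ? /OyB ?]; exact: BS.
Qed.

Section double.
Context {X : topologicalType} (A : set X).

Lemma glued_refl : reflexive (fun p q => `[< glued A p q >]).
Proof. by move=> p; apply/asboolP; left. Qed.

Lemma glued_sym : symmetric (fun p q => `[< glued A p q >]).
Proof.
move=> p q; apply/asboolP/asboolP => -[->|[pq Ap]];
  by [left | right; split; rewrite -pq].
Qed.

Lemma glued_trans : transitive (fun p q => `[< glued A p q >]).
Proof.
move=> q p r /asboolP[->//|[pq Ap]] /asboolP[<-|[qr _]];
  by apply/asboolP; right; split => //; rewrite pq.
Qed.

Definition glue_rel : equiv_rel (X * bool) :=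
  EquivRel _ glued_refl glued_sym glued_trans.

Definition double : topologicalType := quotient_topology {eq_quot glue_rel}.

Definition double_pi (p : X * bool) : double := \pi_({eq_quot glue_rel}) p.

Lemma double_piP p q : double_pi p = double_pi q <-> glued A p q.
Proof. by split => [/eqquotP/asboolP|pq]; last by apply/eqquotP/asboolP. Qed.

Definition double_in (b : bool) (x : X) : double := double_pi (x, b).

Lemma double_in_glued a : A a -> double_in false a = double_in true a.
Proof. by move=> Aa; apply/double_piP; right. Qed.

Lemma double_reprK (c : double) : double_pi (repr c) = c.
Proof. exact: reprK. Qed.

Lemma double_pi_surj (c : double) : exists p, c = double_pi p.
Proof. by exists (repr c); rewrite double_reprK. Qed.

Lemma glued_repr p : glued A (repr (double_pi p)) p.
Proof. by apply/double_piP; rewrite double_reprK. Qed.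

Lemma double_pi_continuous : continuous double_pi.
Proof. exact: pi_continuous. Qed.

Lemma compact_double : compact [set: X] -> compact [set: double].
Proof.
move=> cX; have -> : [set: double] = double_pi @` [set: X * bool].
  by apply/seteqP; split => // c _; have [p ->] := double_pi_surj c; exists p.
apply: continuous_compact; first exact/continuous_subspaceT/double_pi_continuous.
by rewrite -setXTT; exact: compact_setX cX bool_compact.
Qed.

Definition glue_saturated (W : set (X * bool)) :=
  forall p q, glued A p q -> W p -> W q.

Lemma glue_saturated_setXT (U : set X) : glue_saturated (U `*` setT).
Proof. by move=> p q [<-//|[pq _]] [Up _]; split => //; rewrite -pq. Qed.

Lemma glue_saturated_setX1 (U : set X) i : glue_saturated ((U `&` ~` A) `*` [set i]).
Proof. by move=> p q [<-//|[_ Ap]] [[_ /(_ Ap)]]. Qed.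

Section saturated.
Variables (W : set (X * bool)) (W_saturated : glue_saturated W).

Lemma double_image_repr c : (double_pi @` W) c -> W (repr c).
Proof.
by move=> [p Wp <-]; apply: W_saturated Wp; apply/double_piP; rewrite double_reprK.
Qed.

Lemma open_double_image : open W -> open (double_pi @` W).
Proof.
move=> oW; change (open (double_pi @^-1` (double_pi @` W))).
have -> : double_pi @^-1` (double_pi @` W) = W; last exact: oW.
apply/seteqP; split => [p [q Wq /double_piP qp]|p Wp]; last by exists p.
exact: W_saturated qp Wq.
Qed.

Lemma nbhs_double_image p : open W -> W p -> nbhs (double_pi p) (double_pi @` W).
Proof.
by move=> oW Wp; apply: open_nbhs_nbhs; split; [exact: open_double_image | exists p].
Qed.
End saturated.

Lemma double_nbhs_pair (W1 W2 : set (X * bool)) p q :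
  glue_saturated W1 -> glue_saturated W2 -> open W1 -> open W2 -> W1 p -> W2 q ->
  nbhs (double_pi p, double_pi q) [set c | W1 (repr c.1) /\ W2 (repr c.2)].
Proof.
move=> sW1 sW2 oW1 oW2 W1p W2q.
exists (double_pi @` W1, double_pi @` W2); first by split; exact: nbhs_double_image.
by move=> [c1 c2] [W1c1 W2c2]; split; exact: double_image_repr.
Qed.

End double.

(* Independent of the representatives by gammaA_glued. *)
Definition double_dist (R : realType) (X : topologicalType) (d : X -> X -> \bar R)
  (A : set X) (c1 c2 : double A) : \bar R := gammaA d A (repr c1) (repr c2).
Arguments double_dist {R X} d A c1 c2.

Section double_dist.
Variables (R : realType) (X : topologicalType) (d : X -> X -> \bar R) (A : set X).
Hypothesis d_metric : is_metric d.

Let d_ge0 x y : 0 <= d x y. Proof. by case: d_metric. Qed.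
Let d_triangle x y z : d x z <= d x y + d y z. Proof. by case: d_metric. Qed.

Lemma double_dist_pi p q :
  double_dist d A (double_pi A p) (double_pi A q) = gammaA d A p q.
Proof. by apply: (gammaA_glued d_metric); exact: glued_repr. Qed.

Lemma double_dist_metric : is_metric (double_dist d A).
Proof.
have [g0 gxx gtri] := gammaA_metric A d_metric.
by split=> [c c'|c|c c' c'']; rewrite /double_dist; [exact: g0|exact: gxx|exact: gtri].
Qed.

Lemma double_dist_separated : separated_metric d -> upper_continuous d ->
  compact A -> separated_metric (double_dist d A).
Proof.
move=> dsep dup cA c1 c2.
have [[x i] ->] := double_pi_surj c1; have [[y j] ->] := double_pi_surj c2.
rewrite !double_dist_pi !gammaAE /= eq_sym.
case: eqP => [-> dxy dyx|_]; first by rewrite (dsep _ _ dxy dyx).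
move=> /(detour_eq0 d_metric dup cA) [a Aa [xa ay]].
move=> /(detour_eq0 d_metric dup cA) [b Ab [yb bx]].
(* x -> a -> y -> b -> x is a cycle of length 0, hence x = a = y. *)
have dist0 u v w : d u v = 0 -> d v w = 0 -> d u w = 0.
  move=> uv vw; apply/le_anti; rewrite d_ge0 andbT.
  by apply: le_trans (d_triangle u v w) _; rewrite uv vw adde0.
have yx := dist0 _ _ _ yb bx.
have -> := dsep _ _ xa (dist0 _ _ _ ay yx).
have -> := dsep _ _ (dist0 _ _ _ yx xa) ay.
by apply/double_piP; right.
Qed.

Lemma double_dist_gt_near_dist x y (i j : bool) a : upper_continuous d -> a%:E < d x y ->
  \forall c \near (double_pi A (x, i), double_pi A (y, j)),
    a%:E < double_dist d A c.1 c.2.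
Proof.
move=> dup axy.
have [V dxyV aV] := (upper_continuous_lscP d_ge0).1 dup (x, y) a axy.
have [Ox [Oy [[oOx xOx] [oOy yOy] OV]]] := nbhs_pair_open dxyV.
have := double_nbhs_pair (p := (x, i)) (q := (y, j))
  (@glue_saturated_setXT _ A Ox) (@glue_saturated_setXT _ A Oy)
  (open_setX oOx openT) (open_setX oOy openT) (conj xOx I) (conj yOy I).
apply: filterS => c [[xO _] [yO _]].
apply: lt_le_trans (le_gammaA A d_metric _ _).
exact: aV (_, _) (OV (_, _) (conj xO yO)).
Qed.

Lemma double_dist_gt_near_detour x y (i j : bool) a :
  upper_continuous d -> compact A -> closed A ->
  ~ A x -> ~ A y -> i != j -> a%:E < detour d A x y ->
  \forall c \near (double_pi A (x, i), double_pi A (y, j)),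
    a%:E < double_dist d A c.1 c.2.
Proof.
move=> dup cA clA nAx nAy ij adet.
have detour_lsc_d := detour_lsc d_metric dup cA.
have [V dxyV aV] := detour_lsc_d (x, y) a adet.
have [Ox [Oy [[oOx xOx] [oOy yOy] OV]]] := nbhs_pair_open dxyV.
have oOA (O : set X) (k : bool) : open O -> open ((O `&` ~` A) `*` [set k]).
  by move=> oO; apply: open_setX; [exact/openI/closed_openC | exact: discrete_open].
have := double_nbhs_pair (p := (x, i)) (q := (y, j))
  (@glue_saturated_setX1 _ A Ox i) (@glue_saturated_setX1 _ A Oy j)
  (oOA _ i oOx) (oOA _ j oOy)
  (conj (conj xOx nAx) erefl) (conj (conj yOy nAy) erefl).
apply: filterS => c [[[xO _] ci] [[yO _] cj]].
rewrite /double_dist gammaAE ci cj (negbTE ij).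
exact: aV (_, _) (OV (_, _) (conj xO yO)).
Qed.

Lemma double_dist_upper_continuous : upper_continuous d -> compact A -> closed A ->
  upper_continuous (double_dist d A).
Proof.
move=> dup cA clA; have [dd0 _ _] := double_dist_metric.
apply/(upper_continuous_lscP dd0) => -[c1 c2] a /=.
have [[x i] ->] := double_pi_surj c1; have [[y j] ->] := double_pi_surj c2.
rewrite double_dist_pi => agam.
exists [set c | a%:E < double_dist d A c.1 c.2] => //.
have [axy|naxy] := boolP (a%:E < d x y); first exact: double_dist_gt_near_dist.
(* Otherwise i != j, and x, y lie outside A, where gammaA agrees with d. *)
move: agam; rewrite gammaAE /=; case: eqP => [_ axy|/eqP ij adet].
  by rewrite axy in naxy.
apply: double_dist_gt_near_detour => // [Ax|Ay]; move: naxy.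
  by rewrite -(detour_meml d_metric y Ax) adet.
by rewrite -(detour_memr d_metric x Ay) adet.
Qed.

End double_dist.

Lemma double_MetCH_sep_obj (R : realType) (X : topologicalType)
    (d : X -> X -> \bar R) (A : set X) :
  MetCH_sep_obj d -> closed A -> MetCH_sep_obj (double_dist d A).
Proof.
move=> [cX _ dm dsep dup] clA; have cA := subclosed_compact clA cX (@subsetT _ A).
have ddm := double_dist_metric A dm.
have ddsep := double_dist_separated dm dsep dup cA.
have ddup := double_dist_upper_continuous dm dup cA clA.
split => //; first exact: compact_double.
exact: metric_upper_continuous_hausdorff ddm ddsep ddup.
Qed.

Lemma double_in_mor (R : realType) (X : topologicalType) (d : X -> X -> \bar R)
    (A : set X) (b : bool) :
  is_metric d -> MetCH_mor d (double_dist d A) (double_in A b).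
Proof.
move=> dm; split=> [x|x y]; last by rewrite /double_in double_dist_pi // gammaAE eqxx.
apply: (continuous_comp (f := fun x => (x, b))); last exact: double_pi_continuous.
by apply: (@cvg_pair _ _ _ _ (nbhs x) (nbhs b)); [exact: cvg_id | exact: cvg_cst].
Qed.

Lemma kernel_metric_le_gammaA (R : realType) (X P : Type) (d : X -> X -> \bar R)
    (A : set X) (dP : P -> P -> \bar R) (q0 q1 : X -> P) :
  is_metric dP -> (forall x y, dP (q0 x) (q0 y) <= d x y) ->
  (forall x y, dP (q1 x) (q1 y) <= d x y) -> (forall a, A a -> q0 a = q1 a) ->
  forall p q, kernel_metric dP q0 q1 p q <= gammaA d A p q.
Proof.
move=> [_ _ dP_triangle] q0_le q1_le qA [x i] [y j].
pose q_ b := if b then q1 else q0.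
have q_le b u v : dP (q_ b u) (q_ b v) <= d u v by case: b.
have q_A b b' a : A a -> q_ b a = q_ b' a by case: b; case: b' => //= /qA.
rewrite /kernel_metric gammaAE /= -/(q_ i) -/(q_ j).
case: eqP => [->|_]; first exact: q_le.
apply/ereal_infP => _ [a Aa <-]; apply: le_trans (dP_triangle _ (q_ i a) _) _.
apply: leeD; first exact: q_le.
by rewrite (q_A i j a Aa); exact: q_le.
Qed.

Theorem lemma5p11 (R : realType) (X : topologicalType) (d : X -> X -> \bar R)
  (A : set X) (P : topologicalType) (dP : P -> P -> \bar R) (q0 q1 : X -> P) :
  MetCH_sep_obj d -> closed A ->
  is_pushout_along_self d A dP q0 q1 ->
  kernel_metric dP q0 q1 = gammaA d A.
Proof.
move=> Xobj clA [[_ _ dPm _ _] [_ q0_le] [_ q1_le] qA univ].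
have dm : is_metric d by case: Xobj.
have [h [[[_ h_le] hq0 hq1] _]] := univ _ _ (double_MetCH_sep_obj Xobj clA) _ _
  (double_in_mor A false dm) (double_in_mor A true dm) (@double_in_glued _ A).
have hq b x : h ((if b then q1 else q0) x) = double_pi A (x, b).
  by case: b; [have := congr1 (@^~ x) hq1 | have := congr1 (@^~ x) hq0].
apply/funext => -[x i]; apply/funext => -[y j]; apply/le_anti.
rewrite kernel_metric_le_gammaA //= -(double_dist_pi A dm) -!hq.
exact: h_le.
Qed.
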